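(* Let $\widetilde{\mathrm{Sp}}_{2r}^{(n)}$ be the $n$-fold Brylinski--Deligne cover of $\mathrm{Sp}_{2r}$ associated with the Weyl-invariant quadratic form $Q$ on the cocharacter lattice $Y$ normalized by $Q(\alpha_r^\vee)=1$, where $\alpha_r$ is the long simple root. If $4\mid n$, then $\widetilde{\mathrm{Sp}}_{2r}^{(n)}$ is persistent.
   Context: Root datum $(X,\Phi,\Delta;Y,\Phi^\vee,\Delta^\vee)$ of $\mathrm{Sp}_{2r}$, Weyl group $W$, $\rho^\vee$ the half-sum of positive coroots. $B_Q(y,z)=Q(y+z)-Q(y)-Q(z)$, $Y_{Q,n}=\{y\in Y:B_Q(y,z)\in n\mathbf Z\ \forall z\in Y\}$, $n_\alpha=n/\gcd(n,Q(\alpha^\vee))$, $Y^{sc}_{Q,n}$ the lattice spanned by $\{n_\alpha\alpha^\vee:\alpha\in\Delta\}$. $W$ acts on $\mathscr X_{Q,n}=Y/Y_{Q,n}$ and $\mathscr X^{sc}_{Q,n}=Y/Y^{sc}_{Q,n}$ by the twisted action $w[y]=w(y-\rho^\vee)+\rho^\vee$. The cover is persistent if for every $y\in Y$, the stabilizer in $W$ of the image of $y$ in $\mathscr X^{sc}_{Q,n}$ equals the stabilizer of the image of $y$ in $\mathscr X_{Q,n}$. *)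

(* Concrete root datum of Sp_{2r}:
   X = Y = Z^r (row vectors), pairing = dot product,
   simple roots  alpha_i = e_i - e_{i+1} (i < r-1),  alpha_{r-1} = 2 e_{r-1} (long);
   simple coroots alpha_i^v = e_i - e_{i+1} (i < r-1), alpha_{r-1}^v = e_{r-1}.
   Indices are 0-based: the paper's alpha_r is our index r-1. *)
From HB Require Import structures.
From mathcomp Require Import all_boot all_order all_algebra.
Set Implicit Arguments. Unset Strict Implicit. Unset Printing Implicit Defensive.
Import Order.TTheory GRing.Theory Num.Theory.
Local Open Scope ring_scope.

Section SpDatum.
Variable r : nat.

Definition ev (i : 'I_r) : 'rV[int]_r := \row_j ((j == i)%:R).

Definition simple_root (i : 'I_r) : 'rV[int]_r :=
  \row_j (if (i.+1 < r)%N then ((j == i :> nat)%:R - (j == i.+1 :> nat)%:R)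
          else 2 * (j == i :> nat)%:R).
Definition simple_coroot (i : 'I_r) : 'rV[int]_r :=
  \row_j (if (i.+1 < r)%N then ((j == i :> nat)%:R - (j == i.+1 :> nat)%:R)
          else (j == i :> nat)%:R).

Definition emb (y : 'rV[int]_r) : 'rV[rat]_r := map_mx intr y.

(* half-sum of positive coroots: positive coroots of Sp_{2r} are
   e_i - e_j, e_i + e_j (i < j) and e_i *)
Definition rho_vee : 'rV[rat]_r :=
  2^-1 *: emb (\sum_(i < r) \sum_(j < r | (i < j)%N)
                  ((ev i - ev j) + (ev i + ev j))
               + \sum_(i < r) ev i).

Definition sref (i : 'I_r) (v : 'rV[rat]_r) : 'rV[rat]_r :=
  v - (\sum_j ((simple_root i 0 j)%:~R * v 0 j)) *: emb (simple_coroot i).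

(* an element of W given as a word in the simple reflections *)
Definition weyl_act (w : seq 'I_r) (v : 'rV[rat]_r) : 'rV[rat]_r :=
  foldr sref v w.

Definition twisted_act (w : seq 'I_r) (y : 'rV[int]_r) : 'rV[rat]_r :=
  weyl_act w (emb y - rho_vee) + rho_vee.

(* the Weyl-invariant quadratic form with Q(alpha_r^v) = 1 *)
Definition Qsp (y : 'rV[int]_r) : int := \sum_j (y 0 j) ^+ 2.

Definition BQ (Q : 'rV[int]_r -> int) (y z : 'rV[int]_r) : int :=
  Q (y + z) - Q y - Q z.

Definition in_YQn (Q : 'rV[int]_r -> int) (n : nat) (y : 'rV[int]_r) : Prop :=
  forall z : 'rV[int]_r, (n%:Z %| BQ Q y z)%Z.

Definition n_alpha (Q : 'rV[int]_r -> int) (n : nat) (i : 'I_r) : nat :=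
  (n %/ gcdn n `|Q (simple_coroot i)|)%N.

Definition in_YQn_sc (Q : 'rV[int]_r -> int) (n : nat) (y : 'rV[int]_r) : Prop :=
  exists c : 'I_r -> int,
    y = \sum_(i < r) (c i * (n_alpha Q n i)%:Z) *: simple_coroot i.

(* w fixes the image of y in Y / L under the twisted action *)
Definition twisted_fixes (L : 'rV[int]_r -> Prop) (w : seq 'I_r) (y : 'rV[int]_r)
  : Prop :=
  exists l : 'rV[int]_r, L l /\ twisted_act w y - emb y = emb l.

(* persistence: stabilizers in W agree for every y *)
Definition persistent (Q : 'rV[int]_r -> int) (n : nat) : Prop :=
  forall (y : 'rV[int]_r) (w : seq 'I_r),
    twisted_fixes (in_YQn_sc Q n) w y <-> twisted_fixes (in_YQn Q n) w y.

End SpDatum.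

(* Here Q(y) = |y|^2, so B_Q(y, z) = 2 y.z; write n = 4q and m = n/2 = 2q.
   Then Y_{Q,n} = m Z^r, and Y^sc_{Q,n}, spanned by m (e_i - e_{i+1}) and n e_r,
   consists of the m k with sum_j k_j even; it always lies in Y_{Q,n} since
   n_alpha Q(alpha^v) = lcm(n, Q(alpha^v)).  Conversely, let w[y] - y = l = m k.
   The Weyl group preserves the norm, so v := y - rho^v and w v = v + l give
   2 v.l + l.l = 0.  As 2 rho^v has odd coordinates, u := 2 v is an integral
   vector with odd coordinates and u.k + m k.k = 0; m being even, sum_j k_j is
   congruent to u.k modulo 2, hence even. *)
From mathcomp Require Import all_boot all_order all_algebra.
From mathcomp Require Import ring zify.
Set Implicit Arguments. Unset Strict Implicit. Unset Printing Implicit Defensive.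
Import Order.TTheory GRing.Theory Num.Theory.
Local Open Scope ring_scope.

Section Dot.
Variables (R : comPzRingType) (r : nat).
Implicit Types (u v : 'rV[R]_r).

Definition dot u v : R := (u *m v^T) 0 0.

Lemma dotE u v : dot u v = \sum_j u 0 j * v 0 j.
Proof. by rewrite /dot mxE; apply: eq_bigr => j _; rewrite mxE. Qed.

Lemma dotC u v : dot u v = dot v u.
Proof. by rewrite !dotE; apply: eq_bigr => j _; rewrite mulrC. Qed.

Lemma dotDl u u' v : dot (u + u') v = dot u v + dot u' v.
Proof. by rewrite /dot mulmxDl mxE. Qed.

Lemma dotZl a u v : dot (a *: u) v = a * dot u v.
Proof. by rewrite /dot -scalemxAl mxE. Qed.

Lemma dotBl u u' v : dot (u - u') v = dot u v - dot u' v.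
Proof. by rewrite /dot mulmxBl !mxE. Qed.

Lemma dotDr u v v' : dot u (v + v') = dot u v + dot u v'.
Proof. by rewrite dotC dotDl !(dotC _ u). Qed.

Lemma dotZr a u v : dot u (a *: v) = a * dot u v.
Proof. by rewrite dotC dotZl dotC. Qed.

Lemma dotBr u v v' : dot u (v - v') = dot u v - dot u v'.
Proof. by rewrite dotC dotBl !(dotC _ u). Qed.

Lemma dot_suml (I : finType) (F : I -> 'rV[R]_r) v :
  dot (\sum_i F i) v = \sum_i dot (F i) v.
Proof. by rewrite /dot mulmx_suml summxE. Qed.

Lemma dot_reflection a c v : dot c c *: a = 2 *: c ->
  dot (v - dot a v *: c) (v - dot a v *: c) = dot v v.
Proof.
move=> ac; set t := dot a v.
have tc : t * dot c c = 2 * dot c v by rewrite mulrC -[LHS]dotZl ac dotZl.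
rewrite !(dotBl, dotBr, dotZl, dotZr) (dotC v c) tc; ring.
Qed.

End Dot.

Lemma dot_map (R S : comPzRingType) (f : {rmorphism R -> S}) r (u v : 'rV[R]_r) :
  dot (map_mx f u) (map_mx f v) = f (dot u v).
Proof. by rewrite /dot map_trmx -map_mxM mxE. Qed.

Section Datum.
Variable r : nat.
Implicit Types (y z : 'rV[int]_r) (i : 'I_r).

Lemma Qsp_dot y : Qsp y = dot y y.
Proof. by rewrite dotE; apply: eq_bigr => j _; rewrite expr2. Qed.

Lemma BQ_Qsp y z : BQ (@Qsp r) y z = 2 * dot y z.
Proof. rewrite /BQ !Qsp_dot !(dotDl, dotDr) (dotC z y); ring. Qed.

Lemma Qsp_simple_coroot i : Qsp (simple_coroot i) = if (i.+1 < r)%N then 2 else 1.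
Proof.
rewrite /Qsp; case: ifP => short.
- rewrite (bigD1 i) // (bigD1 (Ordinal short)) /=; last by rewrite -val_eqE /= gtn_eqF.
  rewrite big1 => [|j /andP[ji jsi]]; rewrite !mxE short.
    by rewrite eqxx ltn_eqF // gtn_eqF // eqxx addr0.
  by move: ji jsi; rewrite -!val_eqE /= => /negbTE -> /negbTE ->; rewrite subr0 expr0n.
- rewrite (bigD1 i) // big1 => [|j ji]; rewrite !mxE short ?eqxx ?addr0 //.
  by move: ji; rewrite -val_eqE /= => /negbTE ->; rewrite expr0n.
Qed.

Lemma Qsp_coroot_root i : Qsp (simple_coroot i) *: simple_root i = 2 *: simple_coroot i.
Proof.
by apply/matrixP => a b; rewrite Qsp_simple_coroot !mxE; case: ifP; rewrite ?mul1r.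
Qed.

Lemma BQ_Qsp_coroot i z :
  BQ (@Qsp r) (simple_coroot i) z = Qsp (simple_coroot i) * dot (simple_root i) z.
Proof. by rewrite BQ_Qsp -dotZl -Qsp_coroot_root dotZl. Qed.

Lemma n_alpha_Qsp n i : (2 %| n)%N ->
  n_alpha (@Qsp r) n i = if (i.+1 < r)%N then (n %/ 2)%N else n.
Proof.
by move=> n_even; rewrite /n_alpha Qsp_simple_coroot; case: ifP => _;
  rewrite ?(gcdn_idPr n_even) ?gcdn1 ?divn1.
Qed.

End Datum.

Section CorootLattice.
Variables (r : nat) (Q : 'rV[int]_r -> int) (n : nat).
Local Notation sc := (in_YQn_sc Q n).

Lemma YQn_sc0 : sc 0.
Proof. by exists (fun=> 0); rewrite big1 // => i _; rewrite mul0r scale0r. Qed.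

Lemma YQn_scD y y' : sc y -> sc y' -> sc (y + y').
Proof.
move=> [c ->] [c' ->]; exists (fun i => c i + c' i).
by rewrite -big_split; apply: eq_bigr => i _; rewrite mulrDl scalerDl.
Qed.

Lemma YQn_scZ a y : sc y -> sc (a *: y).
Proof.
move=> [c ->]; exists (fun i => a * c i).
by rewrite scaler_sumr; apply: eq_bigr => i _; rewrite scalerA mulrA.
Qed.

Lemma YQn_sc_sum (I : finType) (F : I -> 'rV[int]_r) :
  (forall i, sc (F i)) -> sc (\sum_i F i).
Proof. by move=> scF; apply: big_ind => //; [exact: YQn_sc0 | exact: YQn_scD]. Qed.

Lemma YQn_sc_coroot i : sc ((n_alpha Q n i)%:Z *: simple_coroot i).
Proof.
exists (fun j => (j == i)%:R).
rewrite (bigD1 i) //= eqxx mul1r big1 ?addr0 // => j /negbTE ->.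
by rewrite mul0r scale0r.
Qed.

Lemma dvdn_n_alpha i : (n %| n_alpha Q n i * `|Q (simple_coroot i)|)%N.
Proof. by rewrite /n_alpha mulnC muln_divA ?dvdn_gcdl // mulnC; apply: dvdn_lcml. Qed.

End CorootLattice.

Lemma YQn_sc_sub_YQn r n y : in_YQn_sc (@Qsp r) n y -> in_YQn (@Qsp r) n y.
Proof.
move=> [c ->] z; rewrite BQ_Qsp dot_suml mulr_sumr; apply: rpred_sum => i _.
rewrite dotZl mulrCA -BQ_Qsp BQ_Qsp_coroot -mulrA; apply: dvdz_mull.
rewrite mulrA; apply: dvdz_mulr.
by rewrite dvdzE abszM dvdn_n_alpha.
Qed.

Lemma evE r (j : 'I_r) : ev j = delta_mx 0 j.
Proof. by apply/matrixP => a b; rewrite !mxE (ord1 a) eqxx. Qed.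

Lemma dot_ev r (l : 'rV[int]_r) j : dot l (ev j) = l 0 j.
Proof. by rewrite /dot evE trmx_delta -colE mxE. Qed.

Lemma YQn_Qsp_scale r n l : (2 %| n)%N -> in_YQn (@Qsp r) n l ->
  exists k, l = (n %/ 2)%N%:Z *: k.
Proof.
move=> n_even l_lat; set m := (n %/ 2)%N%:Z.
have nE : n%:Z = 2 * m by rewrite /m -PoszM mulnC divnK.
have m_dvd j : (m %| l 0%R j)%Z.
  by have := l_lat (ev j); rewrite BQ_Qsp dot_ev nE dvdz_mul2l.
exists (map_mx (divz^~ m) l); apply/matrixP => a j.
by rewrite !mxE (ord1 a) mulrC divzK.
Qed.

Lemma simple_coroot_short r (i : 'I_r) (short : (i.+1 < r)%N) :
  simple_coroot i = ev i - ev (Ordinal short).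
Proof. by apply/matrixP => a b; rewrite !mxE short. Qed.

Lemma simple_coroot_long r : simple_coroot (ord_max : 'I_r.+1) = ev ord_max.
Proof. by apply/matrixP => a b; rewrite !mxE ltnn. Qed.

Section SimplyConnectedLattice.
Variables (r n : nat).
Hypothesis n_even : (2 %| n)%N.
Local Notation m := (n %/ 2)%N%:Z.
Local Notation sc := (in_YQn_sc (@Qsp r.+1) n).

Lemma YQn_sc_ev_sub_max (j : 'I_r.+1) : sc (m *: (ev j - ev ord_max)).
Proof.
have [d] := ubnP (r - j); elim: d j => // d IH j.
have [jr lt_d|rj _] := ltnP j r.
- pose j' : 'I_r.+1 := Ordinal (jr : (j.+1 < r.+1)%N).
  have -> : ev j - ev ord_max = (ev j - ev j') + (ev j' - ev ord_max).
    by rewrite addrA subrK.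
  rewrite scalerDr; apply: YQn_scD; last by apply: IH => /=; lia.
  rewrite -simple_coroot_short.
  by have := YQn_sc_coroot (@Qsp r.+1) n j; rewrite n_alpha_Qsp // ltnS jr.
- have -> : j = ord_max by apply/val_inj/eqP; rewrite eqn_leq rj -ltnS ltn_ord.
  by rewrite subrr scaler0; apply: YQn_sc0.
Qed.

Lemma YQn_sc_Qsp (k : 'rV[int]_r.+1) : (2 %| \sum_j k 0 j)%Z -> sc (m *: k).
Proof.
move=> sum_even; set S := \sum_j k 0 j in sum_even *.
have kE : k = \sum_j k 0 j *: (ev j - ev ord_max) + S *: ev ord_max.
  rewrite (eq_bigr _ (fun j _ => scalerBr _ _ _)) sumrB -scaler_suml subrK.
  by rewrite {1}[k]row_sum_delta; apply: eq_bigr => j _; rewrite evE.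
rewrite kE scalerDr scaler_sumr; apply: YQn_scD.
  apply: YQn_sc_sum => j; rewrite scalerA mulrC -scalerA.
  exact/YQn_scZ/YQn_sc_ev_sub_max.
have -> : m *: (S *: ev ord_max) = (S %/ 2)%Z *: (n%:Z *: ev (ord_max : 'I_r.+1)).
  by rewrite !scalerA -{1}(divzK sum_even) mulrCA -PoszM divnK.
apply: YQn_scZ; rewrite -simple_coroot_long.
by have := YQn_sc_coroot (@Qsp r.+1) n ord_max; rewrite n_alpha_Qsp // ltnn.
Qed.

End SimplyConnectedLattice.

Lemma dot_emb r (u v : 'rV[int]_r) : dot (emb u) (emb v) = (dot u v)%:~R.
Proof. exact: dot_map. Qed.

Lemma sref_dot r i (v : 'rV[rat]_r) : dot (sref i v) (sref i v) = dot v v.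
Proof.
have -> : sref i v = v - dot (emb (simple_root i)) v *: emb (simple_coroot i).
  by rewrite /sref dotE; under [in RHS]eq_bigr do rewrite mxE.
apply: dot_reflection.
by rewrite /emb dot_map -Qsp_dot -map_mxZ Qsp_coroot_root map_mxZ.
Qed.

Lemma weyl_act_dot r w (v : 'rV[rat]_r) : dot (weyl_act w v) (weyl_act w v) = dot v v.
Proof. by elim: w => //= i w IH; rewrite sref_dot. Qed.

Definition rho_floor r : 'rV[int]_r := \sum_(i < r) \sum_(j < r | (i < j)%N) ev i.

Lemma sum_ev r : \sum_(i < r) ev i = const_mx 1.
Proof.
apply/matrixP => a b; rewrite summxE (bigD1 b) //= big1 => [|i]; rewrite !mxE.
  by rewrite eqxx addr0.
by move/negbTE; rewrite eq_sym => ->.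
Qed.

Lemma rho_veeE r : rho_vee r = emb (rho_floor r) + 2^-1 *: const_mx 1.
Proof.
have pair i j : (ev i - ev j) + (ev i + ev j) = ev i *+ 2 :> 'rV[int]_r.
  by rewrite addrACA addNr addr0.
rewrite /rho_vee (eq_bigr _ (fun i _ => eq_bigr _ (fun j _ => pair i j))).
under eq_bigr do rewrite sumrMnl.
rewrite sumrMnl sum_ev /emb map_mxD raddfMn map_const_mx scalerDr.
by rewrite -scaler_nat scalerA mulVf ?scale1r.
Qed.

Lemma twisted_shift_dot r w y (l : 'rV[int]_r) : twisted_act w y - emb y = emb l ->
  dot (2 *: (y - rho_floor r) - const_mx 1) l + dot l l = 0.
Proof.
move=> shift; set v := emb y - rho_vee r.
have wv : weyl_act w v = v + emb l.
  by rewrite -shift /twisted_act; apply/matrixP => a b; rewrite !mxE; ring.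
have v2 : emb (2 *: (y - rho_floor r) - const_mx 1) = 2 *: v.
  by apply/matrixP => a b; rewrite /v rho_veeE !mxE; field.
have norm := weyl_act_dot w v; rewrite wv in norm; clearbody v.
apply: (@intr_inj rat); rewrite mulr0z intrD -!dot_emb v2 dotZl.
by rewrite -[RHS](subrr (dot v v)) -{1}norm dotDl !dotDr (dotC (emb l) v); ring.
Qed.

Lemma shift_sum_even r (u k : 'rV[int]_r) (q : int) : q != 0 ->
  dot (2 *: u - const_mx 1) ((2 * q) *: k) + dot ((2 * q) *: k) ((2 * q) *: k) = 0 ->
  (2 %| \sum_j k 0 j)%Z.
Proof.
move=> q_neq0; rewrite !(dotBl, dotZl, dotZr).
have -> : dot (const_mx 1) k = \sum_j k 0 j.
  by rewrite dotE; apply: eq_bigr => j _; rewrite mxE mul1r.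
move=> eq0; apply/dvdzP; exists (dot u k + q * dot k k); apply/eqP.
have : (2 * q) * ((dot u k + q * dot k k) * 2 - \sum_j k 0 j) = 0.
  by rewrite -[RHS]eq0; ring.
by move/eqP; rewrite !mulf_eq0 (negbTE q_neq0) /= subr_eq0 eq_sym.
Qed.

Theorem lemma3p4 (r n : nat) :
  (0 < r)%N -> (0 < n)%N -> (4 %| n)%N -> persistent (@Qsp r) n.
Proof.
case: r => // r _ n_gt0 /dvdnP[q nE] y w.
have n_even : (2 %| n)%N by rewrite nE dvdn_mull.
split=> -[l [l_lat shift]]; exists l; split=> //; first exact: YQn_sc_sub_YQn.
have [k lE] := YQn_Qsp_scale n_even l_lat.
have mE : (n %/ 2)%N%:Z = 2 * q%:Z by lia.
rewrite lE; apply: YQn_sc_Qsp => //.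
apply: (@shift_sum_even _ (y - rho_floor _) _ q%:Z); first by lia.
by rewrite -mE -lE; apply: twisted_shift_dot shift.
Qed.
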